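(* Let $C$ be P. Hall's countable universal locally finite group and let $(c_s)_{s\ge1}$ be a sequence of elements of $C$ with $c_s^2=1$ that generates $C$. Let $(k_s)_{s\ge1}$ be an increasing sequence of integers with $k_{s+1}>2k_s$ for all $s$, and define $f:\mathbb{Z}\to C$ by $f(k_s)=c_s$ and $f(x)=e$ for $x\notin\{k_s:s\ge1\}$. In the unrestricted wreath product $C\wr\wr\mathbb{Z}=C^{\mathbb{Z}}\rtimes\mathbb{Z}$, let $t=(\boldsymbol{e},1)$ and identify $f$ with $(f,0)$. Then the subgroup $\langle f,t\rangle$ contains a subgroup isomorphic to $C$, and $\langle f,t\rangle$ fits in an exact sequence $1\to L\to\langle f,t\rangle\to\mathbb{Z}\to1$ with $L$ locally finite.
   Context: P. Hall's universal group $C$ is the direct union of groups $L_n$, where $L_1=\mathbb{Z}/3\mathbb{Z}$, $L_{n+1}$ is the full symmetric group on the set $L_n$, and $L_n$ embeds in $L_{n+1}$ via the regular representation; it is a simple group. In $C\wr\wr\mathbb{Z}$ elements are pairs $(f,x)$ with $f:\mathbb{Z}\to C$ arbitrary and $x\in\mathbb{Z}$, with product $(f,x)(g,y)=(f\cdot\tau_x g,x+y)$, $\tau_x g(z)=g(z-x)$; $\boldsymbol{e}$ is the constant function $e$. A group is locally finite if every finite subset lies in a finite subgroup. *)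

From HB Require Import structures.
From mathcomp Require Import all_boot all_order all_algebra all_fingroup.
From Stdlib Require Lists.List.
Set Implicit Arguments. Unset Strict Implicit. Unset Printing Implicit Defensive.
Import GRing.Theory.

(* L_1 = Z/3Z (additive group 'I_3), L_{n+1} = Sym(L_n); here indexed from 0. *)
Fixpoint Lg (n : nat) : finGroupType :=
  match n with
  | 0 => ('I_3 : finGroupType)
  | n'.+1 => ({perm (Lg n')} : finGroupType)
  end.

Definition Lemb (n : nat) (x : Lg n) : Lg n.+1 := perm (@mulIg (Lg n) x).

Record gops := GOps {
  gcar :> Type;
  gmul : gcar -> gcar -> gcar;
  gone : gcar;
  ginv : gcar -> gcar }.

Definition is_group (G : gops) : Prop :=
  (forall a b c : G, gmul a (gmul b c) = gmul (gmul a b) c) /\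
  (forall a : G, gmul (gone G) a = a) /\
  (forall a : G, gmul (ginv a) a = gone G).

Definition is_subgroup (G : gops) (H : G -> Prop) : Prop :=
  H (gone G) /\ (forall a b, H a -> H b -> H (gmul a b)) /\
  (forall a, H a -> H (ginv a)).

Definition gen (G : gops) (S : G -> Prop) : G -> Prop :=
  fun w => forall H : G -> Prop, is_subgroup H -> (forall x, S x -> H x) -> H w.

Definition locally_finite (G : gops) (K : G -> Prop) : Prop :=
  forall s : list G, (forall x, List.In x s -> K x) ->
  exists H : G -> Prop, is_subgroup H /\ (forall x, H x -> K x) /\
    (forall x, List.In x s -> H x) /\
    exists e : list G, forall x, H x -> List.In x e.

(* C is (isomorphic to) P. Hall's universal group: a group that is the direct
   union of injective copies of the L_n, compatible with the regular embeddings *)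
Definition is_Hall_universal (C : gops) : Prop :=
  is_group C /\
  exists phi : forall n, Lg n -> C,
    (forall n (x y : Lg n), phi n (x * y)%g = gmul (phi n x) (phi n y)) /\
    (forall n, injective (phi n)) /\
    (forall n (x : Lg n), phi n.+1 (Lemb x) = phi n x) /\
    (forall c : C, exists n (x : Lg n), phi n x = c).

Definition wr_mul (C : gops) (u v : (int -> C) * int) : (int -> C) * int :=
  (fun z => gmul (u.1 z) (v.1 (z - u.2)%R), (u.2 + v.2)%R).
Definition wr_one (C : gops) : (int -> C) * int := (fun _ => gone C, 0%R).
Definition wr_inv (C : gops) (u : (int -> C) * int) : (int -> C) * int :=
  (fun z => ginv (u.1 (z + u.2)%R), (- u.2)%R).
Definition Wr (C : gops) : gops :=
  @GOps ((int -> C) * int) (@wr_mul C) (wr_one C) (@wr_inv C).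

(* C is simple: given v <> 1 and a in C, pick a level L_(n+1) = Sym(L_n)
   containing both, with |L_n| >= 4.  A normal subgroup of C containing v pulls
   back to a normal subgroup of L_(n+2) = Sym(L_(n+1)) containing the image of
   v, hence containing Alt(L_(n+1)); and the regular representation of
   Sym(L_n) lands in Alt(L_(n+1)), as it sends a transposition to a product of
   |L_n|!/2 disjoint transpositions.
   Since k_(s+1) > 2 k_s, two distinct translates of f share only finitely many
   nontrivial coordinates, so the commutator of f with a translate has finite
   support.  Conjugating such an element so that its value at some coordinate
   fails to commute with a far-out generator c_s, and taking the commutator with
   the translate of f placing c_s there, isolates that coordinate; by
   simplicity of C, <f, t> then contains the copy of C at coordinate 0.
   The elements of <f, t> in C^Z are products of translates of f.  For finitely
   many translations, outside a finite set of coordinates at most one factor is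
   nontrivial at each coordinate, and it is an involution, so only the parities
   of the multiplicities matter; on the remaining coordinates the values lie in
   a finite subgroup of the locally finite group C. *)

From HB Require Import structures.
From mathcomp Require Import all_boot all_order all_algebra all_fingroup all_solvable.
From mathcomp Require Import zify ring boolp.
From Stdlib Require Lists.List.
Set Implicit Arguments. Unset Strict Implicit. Unset Printing Implicit Defensive.
Import Order.TTheory GRing.Theory Num.Theory.

Section GroupLaws.
Variable G : gops.
Hypothesis HG : is_group G.
Local Notation "x ** y" := (gmul x y) (at level 40, left associativity).
Local Notation e := (gone G).
Local Notation iv := (@ginv G).

Definition gconj (g a : G) : G := g ** a ** iv g.
Definition gcomm (a b : G) : G := a ** b ** iv a ** iv b.

Lemma gmulA (a b c : G) : a ** (b ** c) = a ** b ** c.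
Proof. by case: HG. Qed.
Lemma gmul1g (a : G) : e ** a = a.
Proof. by case: HG => _ []. Qed.
Lemma gmulVg (a : G) : iv a ** a = e.
Proof. by case: HG => _ []. Qed.
Lemma gmulI (a b c : G) : a ** b = a ** c -> b = c.
Proof. by move=> h; rewrite -(gmul1g b) -(gmul1g c) -(gmulVg a) -!gmulA h. Qed.
Lemma gmulg1 (a : G) : a ** e = a.
Proof. by apply: (@gmulI (iv a)); rewrite gmulA gmulVg gmul1g. Qed.
Lemma gmulgV (a : G) : a ** iv a = e.
Proof. by apply: (@gmulI (iv a)); rewrite gmulA gmulVg gmul1g gmulg1. Qed.
Lemma gmulIl (a b c : G) : b ** a = c ** a -> b = c.
Proof. by move=> h; rewrite -(gmulg1 b) -(gmulg1 c) -(gmulgV a) !gmulA h. Qed.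
Lemma gmul1_eq (a b : G) : a ** b = e -> iv a = b.
Proof. by move=> h; apply: (@gmulI a); rewrite gmulgV. Qed.
Lemma ginvK (a : G) : iv (iv a) = a.
Proof. by apply: (@gmulIl (iv a)); rewrite gmulVg gmulgV. Qed.
Lemma ginvM (a b : G) : iv (a ** b) = iv b ** iv a.
Proof. by apply: gmul1_eq; rewrite gmulA -(gmulA a) gmulgV gmulg1 gmulgV. Qed.
Lemma ginv1 : iv e = e.
Proof. by apply: gmul1_eq; rewrite gmul1g. Qed.

Lemma gconj1 (g : G) : gconj g e = e.
Proof. by rewrite /gconj gmulg1 gmulgV. Qed.
Lemma gconjM (g a b : G) : gconj g (a ** b) = gconj g a ** gconj g b.
Proof. by rewrite /gconj !gmulA -(gmulA _ (iv g) g) gmulVg gmulg1. Qed.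
Lemma gconjV (g a : G) : gconj g (iv a) = iv (gconj g a).
Proof. by rewrite /gconj !ginvM ginvK gmulA. Qed.
Lemma gconjJ (g h a : G) : gconj g (gconj h a) = gconj (g ** h) a.
Proof. by rewrite /gconj ginvM !gmulA. Qed.

Lemma gcommuteM (a b c : G) :
  a ** c = c ** a -> b ** c = c ** b -> a ** b ** c = c ** (a ** b).
Proof. by move=> ha hb; rewrite -gmulA hb gmulA ha gmulA. Qed.
Lemma gcommuteV (a c : G) : a ** c = c ** a -> iv a ** c = c ** iv a.
Proof.
move=> h; apply: (@gmulI a); rewrite !gmulA gmulgV gmul1g.
by rewrite h -gmulA gmulgV gmulg1.
Qed.

Lemma commute_subgroup (y : G) : is_subgroup (fun a => a ** y = y ** a).
Proof.
split; first by rewrite gmul1g gmulg1.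
by split=> [a b ha hb|a ha]; [apply: gcommuteM | apply: gcommuteV].
Qed.

Lemma gcomm1g (b : G) : gcomm e b = e.
Proof. by rewrite /gcomm gmul1g ginv1 gmulg1 gmulgV. Qed.
Lemma gcommg1 (a : G) : gcomm a e = e.
Proof. by rewrite /gcomm gmulg1 gmulgV ginv1 gmulg1. Qed.
Lemma gcomm_eq1 (a b : G) : gcomm a b = e -> a ** b = b ** a.
Proof.
move=> h; have hab : gconj a b = b by apply: (@gmulIl (iv b)); rewrite gmulgV.
by rewrite -{2}hab /gconj -(gmulA (a ** b)) gmulVg gmulg1.
Qed.

End GroupLaws.

Section Generated.
Variables (G : gops) (S : G -> Prop).

Lemma gen_subgroup : is_subgroup (gen S).
Proof.
split; first by move=> H [].
split=> [a b ha hb|a ha] H hH hS; case: (hH) => _ [hM hV].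
  by apply: hM; [apply: ha | apply: hb].
by apply: hV; apply: ha.
Qed.

Lemma gen_in (x : G) : S x -> gen S x.
Proof. by move=> hx H _; apply. Qed.

Lemma gen_one : gen S (gone G).
Proof. by case: gen_subgroup. Qed.

Lemma gen_mul (a b : G) : gen S a -> gen S b -> gen S (gmul a b).
Proof. by case: gen_subgroup => _ [hM _]; apply: hM. Qed.

Lemma gen_inv (a : G) : gen S a -> gen S (ginv a).
Proof. by case: gen_subgroup => _ [_ hV]; apply: hV. Qed.

End Generated.

Definition is_normal (G : gops) (N : G -> Prop) : Prop :=
  is_subgroup N /\ forall g a, N a -> N (gconj g a).

Definition is_simple (G : gops) : Prop :=
  forall N : G -> Prop, is_normal N -> forall v, N v -> v <> gone G -> forall a, N a.

Lemma subgroup_conj (G : gops) (H : G -> Prop) (g a : G) :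
  is_subgroup H -> H g -> H a -> H (gconj g a).
Proof. by case=> _ [hM hV] hg ha; apply: (hM); [apply: hM | apply: hV]. Qed.

Lemma subgroup_comm (G : gops) (H : G -> Prop) (a b : G) :
  is_subgroup H -> H a -> H b -> H (gcomm a b).
Proof.
by case=> _ [hM hV] ha hb; apply: (hM); [apply: (hM); [apply: hM | apply: hV] | apply: hV].
Qed.

Lemma odd_perm_involution (T : finType) (n : nat) (s : {perm T}) :
  (s * s = 1)%g -> #|[set x | s x != x]| = n.*2 -> odd_perm s = odd n.
Proof.
elim: n s => [|n IH] s ss hc.
  suff -> : s = 1%g by rewrite odd_perm1.
  apply/permP => x; rewrite perm1; apply/eqP/negPn/negP => hx.
  by move/eqP: hc; rewrite cards_eq0 => /eqP/setP/(_ x); rewrite !inE hx.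
have sK y : s (s y) = y by rewrite -permM ss perm1.
have : 0 < #|[set x | s x != x]| by rewrite hc.
case/card_gt0P => x; rewrite inE => hx.
have hx' : x != s x by rewrite eq_sym.
pose s' := (tperm x (s x) * s)%g.
have s'E y : s' y = s (tperm x (s x) y) by rewrite permM.
have s's' : (s' * s' = 1)%g.
  apply/permP => y; rewrite permM perm1 !s'E.
  case: (tpermP x (s x) y) => [->|->|/eqP h1 /eqP h2].
  - by rewrite sK tpermL sK.
  - by rewrite tpermR.
  - rewrite tpermD ?sK //.
      by apply/eqP => h; move: h2; rewrite h sK eqxx.
    by apply/eqP => /perm_inj h; move: h1; rewrite h eqxx.
have moved : [set y | s y != y] = x |: (s x |: [set y | s' y != y]).
  apply/setP => y; rewrite !inE s'E.
  case: (tpermP x (s x) y) => [->|->|/eqP h1 /eqP h2].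
  - by rewrite eqxx hx.
  - by rewrite sK eqxx !(orTb, orbT) hx'.
  - by rewrite (negbTE h1) (negbTE h2).
have hc' : #|[set y | s' y != y]| = n.*2.
  move: hc; rewrite moved cardsU1 cardsU1 !inE s'E tpermL sK eqxx s'E tpermR eqxx /=.
  rewrite doubleS; lia.
by have := IH s' s's' hc'; rewrite /s' odd_mul_tperm hx' addTb /= => <-; rewrite negbK.
Qed.

Section RegularPerm.
Variable gT : finGroupType.

Definition rreg (x : gT) : {perm gT} := perm (mulIg x).

Lemma rregE (x y : gT) : rreg x y = (y * x)%g.
Proof. by rewrite permE. Qed.

Lemma rregM (x y : gT) : rreg (x * y) = (rreg x * rreg y)%g.
Proof. by apply/permP => z; rewrite permM !rregE mulgA. Qed.

Lemma rreg1 : rreg 1 = 1%g.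
Proof. by apply/permP => z; rewrite rregE perm1 mulg1. Qed.

Lemma odd_rreg_involution (x : gT) :
  (x * x = 1)%g -> 4 %| #|gT| -> odd_perm (rreg x) = false.
Proof.
move=> xx d4; have [-> | x1] := eqVneq x 1%g; first by rewrite rreg1 odd_perm1.
have moved : #|[set y | rreg x y != y]| = (#|gT| %/ 4).*2.*2.
  have -> : [set y | rreg x y != y] = setT.
    by apply/setP => y; rewrite !inE rregE -{2}(mulg1 y) (inj_eq (mulgI y)).
  by rewrite cardsT -{1}(divnK d4) -!mul2n mulnA mulnC.
rewrite (odd_perm_involution _ moved) ?odd_double //.
by rewrite -rregM xx rreg1.
Qed.

End RegularPerm.

Lemma odd_rreg_perm (T : finType) (y : {perm T}) : 4 <= #|T| -> odd_perm (rreg y) = false.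
Proof.
move=> h4; have [ts -> hts] := prod_tpermP y.
elim: ts hts => [|t ts IH] /=; first by rewrite big_nil rreg1 odd_perm1.
case/andP => _ hts; rewrite big_cons rregM odd_permM IH // addbF.
by rewrite odd_rreg_involution ?tperm2 // -cardsT card_Sym dvdn_fact // h4.
Qed.

Lemma Alt_sub_conj_closed (T : finType) (P : {group {perm T}}) (x : {perm T}) :
  4 < #|T| -> (forall u v, u \in P -> (u ^ v)%g \in P) -> x \in P -> x != 1%g ->
  Alt T \subset P.
Proof.
move=> h5 hJ xP x1.
have [a ha] : exists a, x a != a.
  apply/existsP; apply: contraR x1; rewrite negb_exists => /forallP h.
  by apply/eqP/permP => z; rewrite perm1; apply/eqP; rewrite -[_ == _]negbK h.
have [b /andP[hba hbx]] : exists b, (b != a) && (b != x a).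
  apply/existsP; apply: contraLR h5; rewrite negb_exists => /forallP h.
  rewrite -leqNgt -cardsT.
  have sub2 : [set: T] \subset [set a; x a].
    by apply/subsetP => z _; rewrite !inE; have := h z; rewrite negb_and !negbK orbC.
  by apply: leq_trans (subset_leq_card sub2) _; rewrite cards2; case: (a != x a).
set w := (x^-1 * x ^ tperm (x a) b)%g.
have wP : w \in P by rewrite groupM ?groupV ?hJ.
have wA : w \in Alt T by rewrite Alt_even /w odd_permM odd_permV odd_permJ addbb.
have w1 : w != 1%g.
  apply: contra hbx => /eqP w1; rewrite eq_sym.
  have xJ : (x ^ tperm (x a) b)%g = x by rewrite -(mulKVg x (x ^ _)%g) -/w w1 mulg1.
  by have := permJ x (tperm (x a) b) a; rewrite xJ (tpermD ha hba) tpermL => ->.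
have nP : (P <| Sym_group T)%g.
  rewrite /normal subsetT; apply/subsetP => y _; rewrite inE; apply/subsetP => z.
  by rewrite mem_conjg => hz; rewrite -(conjgKV y z) hJ.
have /simpleP[_ Alt_simple] := simple_Alt5 h5.
case: (Alt_simple _ (normalGI (subsetT (Alt_group T)) nP)) => [AP1|<-]; last exact: subsetIr.
have : w \in (Alt_group T :&: P)%G by rewrite inE wA wP.
by rewrite AP1 inE (negbTE w1).
Qed.

Lemma card_Lg_succ n : #|Lg n.+1| = #|Lg n|`!.
Proof. by rewrite -card_Sym cardsT. Qed.

Lemma card_Lg_ge3 n : 3 <= #|Lg n|.
Proof.
elim: n => [|n IH]; first by rewrite /= card_ord.
rewrite card_Lg_succ; apply: leq_trans IH _.
by case: #|Lg n| => // m; rewrite factS leq_pmulr ?fact_gt0.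
Qed.

Lemma card_Lg_gt4 n : 4 < #|Lg n.+1|.
Proof.
rewrite card_Lg_succ; have := card_Lg_ge3 n.
by case: #|Lg n| => [|[|[|m]]] // _; rewrite !factS; have := fact_gt0 m; nia.
Qed.

Lemma InP (T : eqType) (x : T) (s : seq T) : reflect (List.In x s) (x \in s).
Proof.
elim: s => [|y s IH] /=; first by right.
rewrite inE; apply: (iffP orP) => [[/eqP->|/IH]|[->|/IH]];
  by [left | right | rewrite eqxx | right].
Qed.

Section HallGroup.
Local Unset Implicit Arguments.
Context {C : gops} {phi : forall n, Lg n -> C}.
Hypotheses (HG : is_group C)
  (phiM : forall n (x y : Lg n), phi n (x * y)%g = gmul (phi n x) (phi n y))
  (phiI : forall n, injective (phi n))
  (phiL : forall n (x : Lg n), phi n.+1 (Lemb x) = phi n x)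
  (phiS : forall a : C, exists n (x : Lg n), phi n x = a).
Local Notation "x ** y" := (gmul x y) (at level 40, left associativity).
Local Notation e := (gone C).
Local Notation iv := (@ginv C).

Lemma phi1 n : phi n 1%g = e.
Proof. by apply: (gmulI HG (a := phi n 1%g)); rewrite -phiM mulg1 gmulg1. Qed.

Lemma phiV n (x : Lg n) : phi n x^-1%g = iv (phi n x).
Proof. by apply: (gmulI HG (a := phi n x)); rewrite -phiM mulgV phi1 gmulgV. Qed.

Lemma phi_lift n m : n <= m -> forall x : Lg n, exists y : Lg m, phi m y = phi n x.
Proof.
elim: m => [|m IH]; first by rewrite leqn0 => /eqP-> x; exists x.
rewrite leq_eqVlt ltnS => /orP[/eqP-> x|/IH lift x]; first by exists x.
by have [y <-] := lift x; exists (Lemb y).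
Qed.

Lemma phi_level_seq (l : seq C) :
  exists n, forall a, List.In a l -> exists y : Lg n, phi n y = a.
Proof.
elim: l => [|a l [n IH]]; first by exists 0.
have [m [x <-]] := phiS a.
exists (maxn n m) => b /= [<-|/IH[y <-]]; apply: phi_lift; [exact: leq_maxr | exact: leq_maxl].
Qed.

Lemma phi_not_surj n : ~ (forall a, exists y : Lg n, phi n y = a).
Proof.
move=> surj.
pose g (x : Lg n.+1) : Lg n := odflt 1%g [pick y | `[< phi n y = phi n.+1 x >]].
have gE x : phi n (g x) = phi n.+1 x.
  rewrite /g; case: pickP => [y /asboolP //|none].
  by have [y /asboolP hy] := surj (phi n.+1 x); move: (none y); rewrite hy.
have g_inj : injective g by move=> x y hxy; apply: (phiI n.+1); rewrite -!gE hxy.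
have := leq_card g g_inj; rewrite card_Lg_succ.
have := card_Lg_ge3 n; case: #|Lg n| => [|[|[|m]]] // _.
by rewrite !factS; have := fact_gt0 m; nia.
Qed.

Lemma Hall_nonabelian : exists a b : C, a ** b <> b ** a.
Proof.
pose o0 : Lg 0 := Ordinal (isT : 0 < 3).
pose o1 : Lg 0 := Ordinal (isT : 1 < 3).
pose o2 : Lg 0 := Ordinal (isT : 2 < 3).
exists (phi 1 (tperm o0 o1)), (phi 1 (tperm o1 o2)); rewrite -!phiM => /phiI.
by move/(congr1 (fun p : {perm Lg 0} => p o0)); rewrite !permM !permE.
Qed.

Lemma Hall_simple : is_simple C.
Proof.
move=> N [[N1 [NM _]] NJ] v Nv v1 a.
have [n [x0 hx0]] := phiS v; have [m [y0 <-]] := phiS a.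
have [x hx] := @phi_lift n (n + m).+2 ltac:(lia) x0.
have [y <-] := @phi_lift m (n + m).+2 ltac:(lia) y0.
rewrite -hx0 -hx in Nv v1.
pose P := [set z : Lg (n + m).+3 | `[< N (phi _ z) >]].
have P_group : group_set P.
  apply/group_setP; split=> [|u w]; rewrite !inE; first by rewrite phi1; exact/asboolP.
  by move=> /asboolP Nu /asboolP Nw; apply/asboolP; rewrite phiM; apply: NM.
have P_conj u w : u \in Group P_group -> (u ^ w)%g \in Group P_group.
  rewrite !inE => /asboolP /(NJ (iv (phi _ w))); rewrite /gconj (ginvK HG) => Nuw.
  by apply/asboolP; rewrite /conjg !phiM phiV (gmulA HG).
have xP : Lemb x \in Group P_group by rewrite inE phiL; exact/asboolP.
have x1 : Lemb x != 1%g.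
  by apply/eqP => /(congr1 (phi _)); rewrite phiL phi1.
have AltP := subsetP (@Alt_sub_conj_closed (Lg (n + m).+2) (Group P_group) _
  (card_Lg_gt4 _) P_conj xP x1).
have : Lemb y \in Group P_group.
  by apply: AltP; rewrite Alt_even odd_rreg_perm //; exact: ltnW (card_Lg_gt4 _).
by rewrite inE phiL => /asboolP.
Qed.

Lemma Hall_gen_seq_tail {c : nat -> C} :
  (forall g : C, gen (fun x => exists s, x = c s) g) ->
  forall S, ~ (forall s, S <= s -> c s = e).
Proof.
move=> hgen S tail.
have [n hn] := phi_level_seq [seq c s | s <- iota 0 S].
apply: (phi_not_surj n) => a; apply: (hgen a (fun a => exists y : Lg n, phi n y = a)).
- split; first by exists 1%g; rewrite phi1.
  split=> [_ _ [y <-] [z <-]|_ [y <-]]; first by exists (y * z)%g; rewrite phiM.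
  by exists y^-1%g; rewrite phiV.
- move=> _ [s ->]; case: (ltnP s S) => hs; last by exists 1%g; rewrite phi1 tail.
  by apply/hn/List.in_map/InP; rewrite mem_iota.
Qed.

Lemma Hall_finite_submonoid (l : seq C) : exists F : seq C,
  [/\ forall a, List.In a l -> List.In a F, List.In e F &
      forall a b, List.In a F -> List.In b F -> List.In (a ** b) F].
Proof.
have [n hn] := phi_level_seq l.
have phi_in (y : Lg n) : List.In (phi n y) [seq phi n y | y <- enum (Lg n)].
  by apply/List.in_map/InP; rewrite mem_enum.
exists [seq phi n y | y <- enum (Lg n)]; split.
- by move=> a /hn [y <-].
- by rewrite -(phi1 n); apply: phi_in.
- by move=> _ _ /List.in_map_iff [y [<- _]] /List.in_map_iff [z [<- _]]; rewrite -phiM.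
Qed.

End HallGroup.

Section SimpleGroup.
Variable C : gops.
Hypotheses (HG : is_group C) (Csimple : is_simple C)
  (Cnonab : exists a b : C, gmul a b <> gmul b a).
Local Notation "x ** y" := (gmul x y) (at level 40, left associativity).
Local Notation e := (gone C).

Lemma simple_centerless (x : C) : (forall y, x ** y = y ** x) -> x = e.
Proof.
move=> xZ; apply: contrapT => x1; have [a [b ab]] := Cnonab; apply: ab.
pose Z (u : C) := forall y, u ** y = y ** u.
have Z_normal : is_normal Z.
  split=> [|g u uZ]; last first.
    suff -> : gconj g u = u by [].
    by rewrite /gconj -(uZ g) -(gmulA HG) (gmulgV HG) (gmulg1 HG).
  split; first by move=> y; rewrite (gmul1g HG) (gmulg1 HG).
  split=> [u w uZ wZ|u uZ] y; have [_ [cM cV]] := commute_subgroup HG y.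
    by apply: cM; [apply: uZ | apply: wZ].
  by apply: cV; apply: uZ.
exact: (Csimple Z_normal xZ x1).
Qed.

Variable c : nat -> C.
Hypothesis hgen : forall g : C, gen (fun x => exists s, x = c s) g.

Lemma gen_seq_ind (P : C -> Prop) : is_subgroup P -> (forall s, P (c s)) -> forall a, P a.
Proof. by move=> Psub Pc a; apply: hgen => // _ [s ->]. Qed.

Lemma gen_seq_noncommuting : exists i j, c i ** c j <> c j ** c i.
Proof.
apply: contrapT => comm; have [a [b []]] := Cnonab.
have c_central s u : u ** c s = c s ** u.
  apply: (gen_seq_ind (P := fun u => u ** c s = c s ** u)) => [|i].
    exact: commute_subgroup.
  by apply: contrapT => h; apply: comm; exists i, s.
apply: (gen_seq_ind (P := fun a => a ** b = b ** a)) => [|s]; first exact: commute_subgroup.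
by rewrite c_central.
Qed.

Hypothesis ctail : forall S, ~ (forall s, S <= s -> c s = e).

(* Otherwise the normal closure of [v], which is all of [C], would centralise the
   tail of the generating sequence, which would then be trivial. *)
Lemma conj_noncommuting_tail (v : C) S : v <> e ->
  exists g s, S <= s /\ gconj g v ** c s <> c s ** gconj g v.
Proof.
move=> v1; apply: contrapT => hn.
suff tail : forall s, S <= s -> c s = e by exact: ctail tail.
move=> s Ss.
pose N (a : C) := forall g, gconj g a ** c s = c s ** gconj g a.
have N_normal : is_normal N.
  split; last by move=> g a Na h; rewrite (gconjJ HG); apply: Na.
  split; first by move=> g; rewrite (gconj1 HG) (gmul1g HG) (gmulg1 HG).
  split=> [a b Na Nb|a Na] g; rewrite ?(gconjM HG) ?(gconjV HG).
    exact: gcommuteM.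
  exact: gcommuteV.
have Nv : N v by move=> g; apply: contrapT => h; apply: hn; exists g, s.
apply: simple_centerless => y.
have := Csimple N_normal Nv v1 y (gone C).
by rewrite /gconj (gmul1g HG) (ginv1 HG) (gmulg1 HG).
Qed.

End SimpleGroup.

Section SparseSeq.
Local Open Scope ring_scope.
Variable k : nat -> int.
Hypotheses (hkinc : forall s, k s < k s.+1) (hk2 : forall s, 2 * k s < k s.+1).

Lemma k_le (a b : nat) : (a <= b)%N -> k a <= k b.
Proof.
elim: b => [|b IH]; first by rewrite leqn0 => /eqP ->.
rewrite leq_eqVlt ltnS => /orP[/eqP -> //|/IH h].
exact: le_trans h (ltW (hkinc b)).
Qed.

Lemma k_inj : injective k.
Proof.
suff k_mono a b : (a < b)%N -> k a < k b.
  by move=> a b kab; case: (ltngtP a b) => // /k_mono; rewrite kab ltxx.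
by move=> ab; apply: lt_le_trans (hkinc a) (k_le ab).
Qed.

Lemma k_ge (s : nat) : k 0%N + s%:Z <= k s.
Proof. by elim: s => [|s IH]; [rewrite addr0 | have := hkinc s; lia]. Qed.

Lemma k_sub_gt (a b : nat) : (a < b)%N -> k b.-1 < k b - k a.
Proof. by case: b => // b; rewrite ltnS => /k_le hab /=; have := hk2 b; lia. Qed.

(* Beyond [S], the gaps of [k] exceed [`|d|]. *)
Lemma k_shift_nonhit (d : int) : exists S, forall s : nat, (S <= s)%N -> d != 0 ->
  forall b, k s + d != k b.
Proof.
exists (`|d| + `|k 0%N|).+1%N => s Ss d0 b; apply/eqP => hit.
have d_le : `|d|%:Z <= k s.-1.
  have := k_ge s.-1; have : (`|d| + `|k 0%N| <= s.-1)%N by move: Ss; case: (s).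
  have : - k 0%N <= `|k 0%N|%:Z by rewrite abszE ler_normr lexx orbT.
  lia.
have : d <= `|d|%:Z by rewrite abszE ler_norm.
have : - d <= `|d|%:Z by rewrite abszE ler_normr lexx orbT.
have := k_le (leq_pred s).
case: (ltngtP s b) => [sb|bs|sb].
- have : k s <= k b.-1 by apply: k_le; move: sb; case: (b).
  by have := k_sub_gt sb; lia.
- by have := k_sub_gt bs; lia.
- by move: d0 hit; rewrite sb; lia.
Qed.

Lemma k_shift_nonhit_seq (Ds : seq int) : exists S, forall s : nat, (S <= s)%N ->
  forall d, d \in Ds -> d != 0 -> forall b, k s + d != k b.
Proof.
elim: Ds => [|d Ds [S IH]]; first by exists 0%N.
have [Sd hSd] := k_shift_nonhit d.
exists (maxn S Sd) => s; rewrite geq_max => /andP[sS sSd] d'; rewrite inE.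
by case/orP => [/eqP->|]; [exact: hSd | exact: IH].
Qed.

End SparseSeq.

Section Wreath.
Local Open Scope ring_scope.
Variable C : gops.
Hypothesis HG : is_group C.
Local Notation "x ** y" := (gmul x y) (at level 40, left associativity).
Local Notation e := (gone C).
Local Notation iv := (@ginv C).

Definition wr_base (g : int -> C) : Wr C := (g, 0).
Definition wr_shift (m : int) : Wr C := (fun _ => e, m).
Definition wr_delta (z : int) (a : C) : Wr C := wr_base (fun y => if y == z then a else e).

Lemma wr_ext (u v : Wr C) : u.1 =1 v.1 -> u.2 = v.2 -> u = v.
Proof. by case: u v => [u1 u2] [v1 v2] /= /funext -> ->. Qed.

Lemma wr_baseM g h : gmul (wr_base g) (wr_base h) = wr_base (fun z => g z ** h z).
Proof. by apply: wr_ext => //= z; rewrite subr0. Qed.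

Lemma wr_baseV g : ginv (wr_base g) = wr_base (fun z => iv (g z)).
Proof. by apply: wr_ext => //= z; rewrite addr0. Qed.

Lemma wr_base_conj g h : gconj (wr_base g) (wr_base h) = wr_base (fun z => gconj (g z) (h z)).
Proof. by rewrite /gconj wr_baseV !wr_baseM. Qed.

Lemma wr_base_comm g h : gcomm (wr_base g) (wr_base h) = wr_base (fun z => gcomm (g z) (h z)).
Proof. by rewrite /gcomm !wr_baseV !wr_baseM. Qed.

Lemma wr_shiftS (m : int) : gmul (wr_shift m) (wr_shift 1) = wr_shift (m + 1).
Proof. by apply: wr_ext => //= z; rewrite gmul1g. Qed.

Lemma wr_shiftV (m : int) : ginv (wr_shift m) = wr_shift (- m).
Proof. by apply: wr_ext => //= z; rewrite ginv1. Qed.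

Lemma wr_shift_conj (m : int) g :
  gmul (gmul (wr_shift m) (wr_base g)) (wr_shift (- m)) = wr_base (fun z => g (z - m)).
Proof. by apply: wr_ext => /= [z|]; rewrite ?gmul1g ?gmulg1 // addr0 subrr. Qed.

Lemma wr_delta_inj z : injective (wr_delta z).
Proof. by move=> a b /(congr1 (fun w : Wr C => w.1 z)); rewrite /= eqxx. Qed.

Lemma wr_delta1 z : wr_delta z e = wr_base (fun _ => e).
Proof. by congr wr_base; apply: funext => y; case: ifP. Qed.

Lemma wr_deltaM z a b : wr_delta z (a ** b) = gmul (wr_delta z a) (wr_delta z b).
Proof. by rewrite wr_baseM; congr wr_base; apply: funext => y; case: ifP; rewrite ?gmul1g. Qed.

Lemma wr_deltaV z a : wr_delta z (iv a) = ginv (wr_delta z a).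
Proof. by rewrite wr_baseV; congr wr_base; apply: funext => y; case: ifP; rewrite ?ginv1. Qed.

Lemma wr_delta_conj u z a : gconj (wr_base u) (wr_delta z a) = wr_delta z (gconj (u z) a).
Proof.
rewrite wr_base_conj; congr wr_base; apply: funext => y.
by case: eqVneq => [->|]; rewrite ?gconj1.
Qed.

End Wreath.

Definition ft_gen (C : gops) (f : int -> C) : Wr C -> Prop :=
  gen (fun w : Wr C => w = (f, 0%R) \/ w = wr_shift C 1).

Section ShiftsOfF.
Local Open Scope ring_scope.
Variables (C : gops) (f : int -> C).
Hypothesis HG : is_group C.
Local Notation G := (ft_gen f).

Lemma ft_gen_shift (m : int) : G (wr_shift C m).
Proof.
suff shift_nat (n : nat) : G (wr_shift C n).
  case: m => n; first exact: shift_nat.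
  by rewrite NegzE -(wr_shiftV HG); exact: gen_inv (shift_nat _).
elim: n => [|n IH]; first exact: gen_one.
by rewrite -addn1 PoszD -(wr_shiftS HG); apply: gen_mul IH (gen_in _); right.
Qed.

Lemma ft_gen_base_shift (g : int -> C) (m : int) :
  G (wr_base g) -> G (wr_base (fun z => g (z - m))).
Proof.
move=> Gg; rewrite -(wr_shift_conj HG).
exact: gen_mul (gen_mul (ft_gen_shift _) Gg) (ft_gen_shift _).
Qed.

Lemma ft_gen_fshift (m : int) : G (wr_base (fun z => f (z - m))).
Proof. by apply: ft_gen_base_shift; apply: gen_in; left. Qed.

End ShiftsOfF.

Section Embedding.
Local Open Scope ring_scope.
Variables (C : gops) (c : nat -> C) (k : nat -> int) (f : int -> C).
Hypotheses (HG : is_group C) (Csimple : is_simple C)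
  (Cnonab : exists a b : C, gmul a b <> gmul b a)
  (hgen : forall g : C, gen (fun x => exists s, x = c s) g)
  (ctail : forall S, ~ (forall s, (S <= s)%N -> c s = gone C))
  (hkinc : forall s, k s < k s.+1) (hk2 : forall s, 2 * k s < k s.+1)
  (hf1 : forall s, f (k s) = c s)
  (hf2 : forall x, (forall s, x <> k s) -> f x = gone C).
Local Notation "x ** y" := (gmul x y) (at level 40, left associativity).
Local Notation e := (gone C).
Local Notation G := (ft_gen f).

Lemma f_support x : f x <> e -> exists s, x = k s.
Proof. by move=> fx; apply: contrapT => hx; apply/fx/hf2 => s xs; apply: hx; exists s. Qed.

Lemma ft_gen_base_at (z : int) (a : C) : exists u, G (wr_base u) /\ u z = a.
Proof.
apply: (gen_seq_ind hgen (P := fun a => exists u, G (wr_base u) /\ u z = a)) => [|s].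
  split; first by exists (fun _ => e); split; first exact: gen_one.
  split=> [_ _ [u [Gu <-]] [v [Gv <-]]|_ [u [Gu <-]]].
    by exists (fun y => u y ** v y); rewrite -wr_baseM; split; first exact: gen_mul.
  by exists (fun y => ginv (u y)); rewrite -wr_baseV; split; first exact: gen_inv.
exists (fun y => f (y - (z - k s))); split; first exact: ft_gen_fshift.
by rewrite opprB addrC subrK hf1.
Qed.

Lemma ft_gen_finite_support : exists (g : int -> C) (Z0 : seq int) (z0 : int),
  [/\ G (wr_base g), forall z, z \notin Z0 -> g z = e & g z0 <> e].
Proof.
have [i [j cij]] := gen_seq_noncommuting HG Cnonab hgen.
pose D := k i - k j.
have D0 : D != 0.
  by rewrite subr_eq0; apply/eqP => /k_inj ij; apply: cij; rewrite ij.
have [S hS] := k_shift_nonhit_seq hkinc hk2 [:: - D].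
exists (fun z => gcomm (f z) (f (z - D))); exists (map k (iota 0 S)), (k i); split.
- have Gf : G (wr_base f) by apply: gen_in; left.
  by rewrite -wr_base_comm; exact: subgroup_comm (gen_subgroup _) Gf (ft_gen_fshift _ _).
- move=> z zS.
  have [fz|/f_support[a za]] := pselect (f z = e); first by rewrite fz gcomm1g.
  have [fzD|/f_support[b zb]] := pselect (f (z - D) = e); first by rewrite fzD gcommg1.
  have aS : (S <= a)%N.
    by rewrite leqNgt; move: zS; apply: contraNN => aS; rewrite za map_f // mem_iota.
  move: (hS a aS (- D)); rewrite mem_seq1 eqxx oppr_eq0 D0 -za zb.
  by move=> /(_ isT isT b); rewrite eqxx.
- by rewrite hf1 /D opprB addrC subrK hf1 => /(gcomm_eq1 HG).
Qed.

Lemma ft_gen_delta_of_support (g : int -> C) (Z0 : seq int) (z0 : int) :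
  G (wr_base g) -> (forall z, z \notin Z0 -> g z = e) -> g z0 <> e ->
  exists a, a <> e /\ G (wr_delta z0 a).
Proof.
move=> Gg supp gz0.
have [S hS] := k_shift_nonhit_seq hkinc hk2 [seq z - z0 | z <- Z0].
have [h [s [Ss hs]]] := conj_noncommuting_tail HG Csimple Cnonab ctail S gz0.
have [u [Gu uz0]] := ft_gen_base_at z0 h.
exists (gcomm (gconj h (g z0)) (c s)); split; first by move/(gcomm_eq1 HG).
have Gconj := subgroup_conj (gen_subgroup _) Gu Gg.
have := subgroup_comm (gen_subgroup _) Gconj (ft_gen_fshift HG (z0 - k s)).
rewrite wr_base_conj wr_base_comm; congr G; congr wr_base; apply: funext => y.
have [->|yz0] := eqVneq y z0; first by rewrite uz0 opprB addrC subrK hf1.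
have [yZ0|/supp->] := boolP (y \in Z0); last by rewrite (gconj1 HG) (gcomm1g HG).
rewrite hf2 ?(gcommg1 HG) // => b.
have := hS s Ss (y - z0) (map_f _ yZ0); rewrite subr_eq0 yz0 => /(_ isT b) /eqP.
by apply: contra_not => <-; ring.
Qed.

Lemma ft_gen_delta0 : (exists z a, a <> e /\ G (wr_delta z a)) -> forall a, G (wr_delta 0 a).
Proof.
move=> [z [a [a1 Gza]]].
have G0a : G (wr_delta 0 a).
  have := ft_gen_base_shift HG (- z) Gza; congr G; congr wr_base; apply: funext => y.
  by rewrite opprK -{2}(add0r z) (inj_eq (addIr z)).
apply: (Csimple (N := fun a => G (wr_delta 0 a))) G0a a1; split.
  split; first by rewrite wr_delta1; exact: gen_one.
  split=> [b b' Gb Gb'|b Gb]; first by rewrite (wr_deltaM HG); exact: gen_mul.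
  by rewrite (wr_deltaV HG); exact: gen_inv.
move=> g b Gb; have [u [Gu <-]] := ft_gen_base_at 0 g.
by rewrite -(wr_delta_conj HG); exact: subgroup_conj (gen_subgroup _) Gu Gb.
Qed.

Lemma ft_gen_embeds : exists psi : C -> Wr C,
  [/\ injective psi, forall a b, psi (a ** b) = gmul (psi a) (psi b) & forall a, G (psi a)].
Proof.
have [g [Z0 [z0 [Gg supp gz0]]]] := ft_gen_finite_support.
have [a [a1 Ga]] := ft_gen_delta_of_support Gg supp gz0.
exists (wr_delta 0); split; first exact: wr_delta_inj.
  exact: wr_deltaM.
by apply: ft_gen_delta0; exists z0, a.
Qed.

End Embedding.

Fixpoint tuples (X : Type) (A : list X) (n : nat) : list (list X) :=
  if n is n'.+1 then List.flat_map (fun a => List.map (cons a) (tuples A n')) A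
  else [:: [::]].

Lemma tuples_in (X : Type) (A : list X) (vs : list X) :
  (forall x, List.In x vs -> List.In x A) -> List.In vs (tuples A (size vs)).
Proof.
elim: vs => [|v vs IH] vsA /=; first by left.
apply/List.in_flat_map; exists v; split; first by apply: vsA; left.
by apply/List.in_map/IH => x xvs; apply: vsA; right.
Qed.

Section Kernel.
Local Open Scope ring_scope.
Variables (C : gops) (c : nat -> C) (k : nat -> int) (f : int -> C).
Hypotheses (HG : is_group C)
  (Cfin : forall l : seq C, exists F : seq C,
     [/\ forall a, List.In a l -> List.In a F, List.In (gone C) F &
         forall a b, List.In a F -> List.In b F -> List.In (gmul a b) F])
  (hc2 : forall s, gmul (c s) (c s) = gone C)
  (hkinc : forall s, k s < k s.+1) (hk2 : forall s, 2 * k s < k s.+1)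
  (hf1 : forall s, f (k s) = c s)
  (hf2 : forall x, (forall s, x <> k s) -> f x = gone C).
Local Notation "x ** y" := (gmul x y) (at level 40, left associativity).
Local Notation e := (gone C).
Local Notation iv := (@ginv C).
Local Notation G := (ft_gen f).

Lemma f_invol x : f x ** f x = e.
Proof.
have [[s ->]|xk] := pselect (exists s, x = k s); first by rewrite hf1 hc2.
by rewrite hf2 ?gmulg1 // => s xs; apply: xk; exists s.
Qed.

Lemma f_inv x : iv (f x) = f x.
Proof. exact/(gmul1_eq HG)/f_invol. Qed.

(* The base coordinates of [t^m1 f t^-m1 ... t^mn f t^-mn]. *)
Definition fprod (l : seq int) (z : int) : C := foldr (fun m acc => f (z - m) ** acc) e l.

Lemma fprod_cat l1 l2 z : fprod (l1 ++ l2) z = fprod l1 z ** fprod l2 z.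
Proof. by elim: l1 => [|m l1 IH] /=; rewrite ?(gmul1g HG) // IH (gmulA HG). Qed.

Lemma fprod_rev l z : iv (fprod l z) = fprod (rev l) z.
Proof.
elim: l => [|m l IH] /=; first exact: ginv1.
by rewrite (ginvM HG) IH rev_cons -cats1 fprod_cat /= f_inv (gmulg1 HG).
Qed.

Lemma fprod_shift l n z : fprod [seq m + n | m <- l] z = fprod l (z - n).
Proof. by elim: l => [|m l IH] //=; rewrite IH; congr (f _ ** _); ring. Qed.

Lemma ft_gen_fprod l : G (wr_base (fprod l)).
Proof.
elim: l => [|m l IH]; first exact: gen_one.
by have := gen_mul (ft_gen_fshift HG m) IH; rewrite wr_baseM.
Qed.

Lemma ft_gen_fprod_shape w : G w -> exists l, w.1 = fprod l.
Proof.
move/(_ (fun w : Wr C => exists l, w.1 = fprod l)); apply; last first.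
  move=> _ [->|->]; last by exists [::].
  by exists [:: 0]; apply: funext => z /=; rewrite subr0 (gmulg1 HG).
split; first by exists [::].
split=> [[a1 a2] [b1 b2] [la /= ->] [lb /= ->]|[a1 a2] [la /= ->]].
  exists (la ++ [seq m + a2 | m <- lb]); apply: funext => z.
  by rewrite /= fprod_cat fprod_shift.
exists [seq m + - a2 | m <- rev la]; apply: funext => z.
by rewrite /= fprod_shift opprK fprod_rev.
Qed.

Lemma fprod_single l z m0 : (forall m, m \in l -> m != m0 -> f (z - m) = e) ->
  fprod l z = if odd (count_mem m0 l) then f (z - m0) else e.
Proof.
elim: l => [|m l IH] //= only.
rewrite IH => [|m' m'l]; last by apply: only; rewrite inE m'l orbT.
have [->|mm0] /= := eqVneq m m0.
  by rewrite add0n; case: odd; rewrite /= ?f_invol ?(gmulg1 HG).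
by rewrite (only m) ?inE ?eqxx // (gmul1g HG) add0n.
Qed.

Lemma fprod_triv l z : (forall m, m \in l -> f (z - m) = e) -> fprod l z = e.
Proof.
elim: l => [|m l IH] //= triv.
by rewrite triv ?inE ?eqxx // IH ?(gmul1g HG) // => m' m'l; rewrite triv // inE m'l orbT.
Qed.

Lemma fprod_parity (ms l : seq int) z : {subset l <= ms} ->
  {in ms &, forall m m', f (z - m) <> e -> f (z - m') <> e -> m = m'} ->
  fprod l z = fprod [seq m <- undup ms | odd (count_mem m l)] z.
Proof.
move=> lms single; set l' := filter _ _.
have l'ms : {subset l' <= ms} by move=> m; rewrite mem_filter mem_undup => /andP[].
have [[m0 [m0ms fm0]]|triv] := pselect (exists m0, m0 \in ms /\ f (z - m0) <> e).
  have only m : m \in ms -> m != m0 -> f (z - m) = e.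
    by move=> mms /eqP mm0; apply: contrapT => fm; apply/mm0/single.
  rewrite (fprod_single (m0 := m0)) => [|m /lms]; last exact: only.
  rewrite (fprod_single (m0 := m0)) => [|m /l'ms]; last exact: only.
  rewrite (@count_uniq_mem _ l' m0) ?filter_uniq ?undup_uniq //.
  by rewrite mem_filter mem_undup m0ms andbT; case: odd.
have triv' m : m \in ms -> f (z - m) = e.
  by move=> mms; apply: contrapT => fm; apply: triv; exists m.
by rewrite !fprod_triv // => m mms; apply: triv'; [apply: l'ms | apply: lms].
Qed.

Lemma fshift_sparse (ms : seq int) : exists Zs : seq int, forall z, z \notin Zs ->
  {in ms &, forall m m', f (z - m) <> e -> f (z - m') <> e -> m = m'}.
Proof.
have [S hS] := k_shift_nonhit_seq hkinc hk2 [seq m - m' | m <- ms, m' <- ms].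
exists [seq k a + m | a <- iota 0 S, m <- ms] => z zZs m m' mms m'ms.
move=> /(f_support hf2)[a za] /(f_support hf2)[b zb]; apply/eqP; apply: contraT => mm'.
have aS : (S <= a)%N.
  rewrite leqNgt; move: zZs; apply: contraNN => aS; apply/allpairsP; exists (a, m).
  by rewrite mem_iota /= -za subrK.
have := hS a aS (m - m') (allpairs_f _ mms m'ms); rewrite subr_eq0 mm' => /(_ isT b).
by rewrite -za -zb (_ : z - m + (m - m') = z - m') ?eqxx //; ring.
Qed.

Definition fprod_span (ms : seq int) (w : Wr C) : Prop :=
  exists l, {subset l <= ms} /\ w = wr_base (fprod l).

Lemma fprod_span_subgroup ms : is_subgroup (fprod_span ms).
Proof.
split; first by exists [::].
split=> [_ _ [la [lams ->]] [lb [lbms ->]]|_ [la [lams ->]]].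
  exists (la ++ lb); split; first by move=> m; rewrite mem_cat => /orP[/lams|/lbms].
  by rewrite wr_baseM; congr wr_base; apply: funext => z; rewrite fprod_cat.
exists (rev la); split; first by move=> m; rewrite mem_rev => /lams.
by rewrite wr_baseV; congr wr_base; apply: funext => z; rewrite fprod_rev.
Qed.

Lemma fprod_span_kernel ms w : fprod_span ms w -> G w /\ w.2 = 0.
Proof. by move=> [l [_ ->]]; split; first exact: ft_gen_fprod. Qed.

Lemma kernel_fprod_span (s : seq (Wr C)) : (forall w, List.In w s -> G w /\ w.2 = 0) ->
  exists ms, forall w, List.In w s -> fprod_span ms w.
Proof.
elim: s => [|w s IH] ker; first by exists [::].
have [ms span] := IH (fun x xs => ker x (or_intror xs)).
have [Gw w2] := ker w (or_introl erefl).
have [l wl] := ft_gen_fprod_shape Gw.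
exists (l ++ ms) => x /= [<-|xs].
  exists l; split; first by move=> m ml; rewrite mem_cat ml.
  by case: (w) wl w2 => w1 _ /= -> ->.
have [l' [l'ms ->]] := span x xs; exists l'; split => // m /l'ms ms_m.
by rewrite mem_cat ms_m orbT.
Qed.

(* An element of the span is encoded by its values on [Zs], which lie in [F],
   and by the parities of the multiplicities of its factors. *)
Lemma fprod_span_finite ms :
  exists en : seq (Wr C), forall w, fprod_span ms w -> List.In w en.
Proof.
have [Zs single] := fshift_sparse ms.
have [F [F_vals F1 FM]] := Cfin (List.flat_map (fun z => List.map (fun m => f (z - m)) ms) Zs).
have fprod_F l z : {subset l <= ms} -> z \in Zs -> List.In (fprod l z) F.
  elim: l => [|m l IH] lms zZs //=.
  apply: FM; last by apply: IH => // m' m'l; apply: lms; rewrite inE m'l orbT.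
  apply/F_vals/List.in_flat_map; exists z; split; first exact/InP.
  by apply: (List.in_map (fun m => f (z - m))); apply/InP/lms; rewrite inE eqxx.
pose rebuild (vs : seq C) (ps : seq bool) : Wr C := wr_base (fun z =>
  if z \in Zs then nth e vs (index z Zs) else fprod (mask ps (undup ms)) z).
exists (List.flat_map
  (fun vs => List.map (rebuild vs) (tuples [:: true; false] (size (undup ms))))
  (tuples F (size Zs))).
move=> _ [l [lms ->]]; apply/List.in_flat_map; exists (map (fprod l) Zs); split.
  rewrite -(size_map (fprod l) Zs); apply: tuples_in => _ /List.in_map_iff [z [<- /InP zZs]].
  exact: fprod_F.
have -> : wr_base (fprod l) =
    rebuild (map (fprod l) Zs) [seq odd (count_mem m l) | m <- undup ms].
  congr wr_base; apply: funext => z; case: ifP => zZs.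
    by rewrite (nth_map 0) ?index_mem // nth_index.
  by rewrite -filter_mask; apply: fprod_parity => //; apply: single; rewrite zZs.
apply: List.in_map; rewrite -(size_map (fun m => odd (count_mem m l)) (undup ms)).
by apply: tuples_in => -[] _; [left | right; left].
Qed.

Lemma kernel_locally_finite : locally_finite (fun w : Wr C => G w /\ w.2 = 0).
Proof.
move=> s s_ker; have [ms span] := kernel_fprod_span s_ker.
have [en fin] := fprod_span_finite ms.
exists (fprod_span ms); split; first exact: fprod_span_subgroup.
by split; [exact: fprod_span_kernel | split; [exact: span | exists en]].
Qed.

End Kernel.

Theorem fact5p2 (C : gops) (HC : is_Hall_universal C)
  (c : nat -> C) (k : nat -> int) (f : int -> C)
  (hc2 : forall s, gmul (c s) (c s) = gone C)
  (hgen : forall g : C, gen (fun x => exists s, x = c s) g)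
  (hkinc : forall s, (k s < k s.+1)%R)
  (hk2 : forall s, (2 * k s < k s.+1)%R)
  (hf1 : forall s, f (k s) = c s)
  (hf2 : forall x, (forall s, x <> k s) -> f x = gone C) :
  let W := Wr C in
  let t : W := (fun _ => gone C, 1%R) in
  let fw : W := (f, 0%R) in
  let G := gen (fun w : W => w = fw \/ w = t) in
  (exists psi : C -> W, injective psi /\
     (forall a b, psi (gmul a b) = gmul (psi a) (psi b)) /\
     (forall a, G (psi a))) /\
  (exists pi : W -> int,
     (forall a b, G a -> G b -> pi (gmul a b) = (pi a + pi b)%R) /\
     (forall z : int, exists w, G w /\ pi w = z) /\
     locally_finite (fun w => G w /\ pi w = 0%R)).
Proof.
move=> W t fw G.
have [HG [phi [phiM [phiI [phiL phiS]]]]] := HC.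
have Csimple := Hall_simple HG phiM phiL phiS.
have Cnonab := Hall_nonabelian phiM phiI.
have ctail := Hall_gen_seq_tail HG phiM phiI phiL phiS hgen.
split.
  have [psi [psi_inj psiM Gpsi]] :=
    ft_gen_embeds HG Csimple Cnonab hgen ctail hkinc hk2 hf1 hf2.
  by exists psi.
exists snd; split; first by [].
split; first by move=> z; exists (wr_shift C z); split; first exact: ft_gen_shift.
have Cfin := Hall_finite_submonoid HG phiM phiL phiS.
exact (kernel_locally_finite HG Cfin hc2 hkinc hk2 hf1 hf2).
Qed.
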